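(* Let $\mathcal Y$ be a finite set, $L:\mathcal Y\times\mathcal A\to\mathbb R$ a loss function, and $P_Y,Q_Y$ distributions on $\mathcal Y$. (a) If $D_{\chi^2}(P_Y\|Q_Y)\le\beta^2$, then $D_L(P_Y\|Q_Y)=O(\beta)$. (b) If, in addition, $H_L(Y)$ is twice differentiable in $P_Y$, then $D_L(P_Y\|Q_Y)=O(\beta^2)$.
   Context: Minima are assumed attained. A Bayes action $a_P$ of a distribution $P$ on $\mathcal Y$ is a minimizer of $a\mapsto\mathbb E_{Y\sim P}[L(Y,a)]$; $H_L(Y)=\min_{a\in\mathcal A}\mathbb E_{Y\sim P_Y}[L(Y,a)]$, viewed as a function of the probability vector $P_Y$. The $L$-divergence is $D_L(P\|Q)=\mathbb E_{Y\sim P}[L(Y,a_Q)]-\mathbb E_{Y\sim P}[L(Y,a_P)]\ge0$. Neyman's $\chi^2$-divergence is $D_{\chi^2}(P\|Q)=\sum_y\frac{(P(y)-Q(y))^2}{Q(y)}$ ($0^2/0=0$). Big-O is as $\beta\to0$ with $Q_Y$ and $L$ fixed. *)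

From HB Require Import structures.
From mathcomp Require Import all_boot all_order all_algebra.
From mathcomp Require Import all_classical all_reals all_analysis.
Set Implicit Arguments. Unset Strict Implicit. Unset Printing Implicit Defensive.
Import Order.TTheory GRing.Theory Num.Theory.
Import numFieldNormedType.Exports.
Local Open Scope ring_scope.
Local Open Scope classical_set_scope.

(* The finite label set Y is encoded as 'I_n; a distribution (probability
   vector) on Y is a row vector P : 'rV[R]_n with P 0 y = P(y). *)
Section Defs.
Context {R : realType} {n : nat} {A : Type}.

Definition is_distr (P : 'rV[R]_n) : Prop :=
  (forall i, 0 <= P 0 i) /\ \sum_i P 0 i = 1.

Definition simplex : set 'rV[R]_n := [set P | is_distr P].

Definition expL (L : 'I_n -> A -> R) (P : 'rV[R]_n) (a : A) : R :=
  \sum_i P 0 i * L i a.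

Definition bayes_action (L : 'I_n -> A -> R) (P : 'rV[R]_n) (a : A) : Prop :=
  forall a', expL L P a <= expL L P a'.

Definition HL (L : 'I_n -> A -> R) (P : 'rV[R]_n) : R :=
  inf (range (expL L P)).

(* L-divergence, given Bayes actions aP of P and aQ of Q *)
Definition DL (L : 'I_n -> A -> R) (P : 'rV[R]_n) (aP aQ : A) : R :=
  expL L P aQ - expL L P aP.

Definition chi2 (P Q : 'rV[R]_n) : \bar R :=
  (\sum_(i < n)
     (if Q 0%R i == 0%R then (if P 0%R i == 0%R then 0%E else +oo%E)
      else (((P 0%R i - Q 0%R i) ^+ 2 / Q 0%R i)%R)%:E))%E.

Definition twice_differentiable_on (U : set 'rV[R]_n) (h : 'rV[R]_n -> R) : Prop :=
  (forall x, U x -> differentiable h x) /\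
  (forall (v : 'rV[R]_n) x, U x -> differentiable (fun z => 'd h z v) x).

End Defs.

From HB Require Import structures.
From mathcomp Require Import all_boot all_order all_algebra.
From mathcomp Require Import all_classical all_reals all_analysis.
From mathcomp Require Import ring lra.
Set Implicit Arguments. Unset Strict Implicit. Unset Printing Implicit Defensive.
Import Order.TTheory GRing.Theory Num.Theory.
Import numFieldNormedType.Exports.
Local Open Scope ring_scope.
Local Open Scope classical_set_scope.

(* H_L is an infimum of functions linear in P, hence concave on the simplex, and D_L(P||Q) is
   the gap E_P[L(.,a_Q)] - H_L(P) between H_L and its supporting hyperplane at Q.  A chi^2 bound
   beta^2 gives |P(y) - Q(y)| <= beta, and for small beta also |P(y) - Q(y)| <= (2 beta/q) P(y),
   q being the least nonzero mass of Q.
   (a) With m(y) = min_a L(y,a), the gap is at most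
   sum (P - Q)(L(.,a_Q) - m) + sum (Q - P)(L(.,a_P) - m); the second sum involves the possibly
   unbounded L(.,a_P), but by the relative bound it is at most (2 beta/q) E_P[L(.,a_P) - m],
   and E_P[L(.,a_P)] <= E_P[L(.,a_Q)].
   (b) For small beta, W = Q - (P - Q)/2 is still a distribution.  The supergradient inequalities of
   H_L at P and at W, with H_L(W) <= E_W[L(.,a_Q)], bound the gap by dH_W(P - Q) - dH_P(P - Q);
   the differential being locally Lipschitz at Q and |P - Q|, |W - Q| <= beta, this is O(beta^2). *)

Section MatrixNorm.
Context {R : realType} {m n : nat}.

Lemma entry_le_mx_norm (M : 'M[R]_(m, n)) i j : `|M i j| <= `|M|.
Proof.
rewrite [X in _ <= X]mx_normrE.
exact: (le_bigmax 0 (fun ij : 'I_m * 'I_n => `|M ij.1 ij.2|) (i, j)).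
Qed.

Lemma mx_norm_le (M : 'M[R]_(m, n)) b :
  0 <= b -> (forall i j, `|M i j| <= b) -> `|M| <= b.
Proof.
by move=> b0 hb; rewrite [X in X <= _]mx_normrE; apply: bigmax_le => // -[i j] _.
Qed.

End MatrixNorm.

Section Distributions.
Context {R : realType} {n : nat}.
Implicit Types (P Q X Y : 'rV[R]_n).

Lemma distr_le1 P i : is_distr P -> P 0 i <= 1.
Proof.
move=> [P0 <-]; rewrite (bigD1 i) //= lerDl.
by apply: sumr_ge0 => j _; exact: P0.
Qed.

Lemma is_distr_delta i : is_distr (delta_mx 0 i : 'rV[R]_n).
Proof.
split; first by move=> j; rewrite mxE; case: (_ && _).
rewrite (bigD1 i) //= big1 ?mxE ?eqxx ?addr0 // => j /negbTE ji.
by rewrite mxE ji andbF.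
Qed.

Lemma is_distr_lerp X Y t :
  is_distr X -> is_distr Y -> 0 <= t <= 1 -> is_distr (t *: (Y - X) + X).
Proof.
move=> [X0 X1] [Y0 Y1] /andP[t0 t1].
have E i : (t *: (Y - X) + X) 0 i = t * Y 0 i + (1 - t) * X 0 i.
  by rewrite !mxE; ring.
split=> [i|]; first by rewrite E addr_ge0 ?mulr_ge0 ?subr_ge0.
rewrite (eq_bigr _ (fun i _ => E i)) big_split /= -!mulr_sumr X1 Y1; ring.
Qed.

Lemma is_distr_reflect P Q : is_distr P -> is_distr Q ->
  (forall i, P 0 i <= 3 * Q 0 i) -> is_distr (Q - 2^-1 *: (P - Q)).
Proof.
move=> [_ P1] [_ Q1] P3Q.
have E i : (Q - 2^-1 *: (P - Q)) 0 i = 2^-1 * (3 * Q 0 i - P 0 i).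
  by rewrite !mxE; field.
split=> [i|]; first by rewrite E mulr_ge0 ?subr_ge0.
rewrite (eq_bigr _ (fun i _ => E i)) -mulr_sumr sumrB -mulr_sumr P1 Q1.
by field.
Qed.

Lemma support_min_gt0 Q : is_distr Q ->
  exists2 q : R, 0 < q & forall i, Q 0 i != 0 -> q <= Q 0 i.
Proof.
move=> [Q0 _]; exists (\big[Order.min/1]_(i | Q 0 i != 0) Q 0 i).
  by apply: lt_bigmin => // i Qi; rewrite lt_def Qi Q0.
by move=> i Qi; exact: bigmin_le_cond.
Qed.

Definition chi2_summand P Q i : \bar R :=
  if Q 0 i == 0 then (if P 0 i == 0 then 0%E else +oo%E)
  else ((P 0 i - Q 0 i) ^+ 2 / Q 0 i)%:E.

Lemma chi2_summand_ge0 P Q i : is_distr Q -> (0 <= chi2_summand P Q i)%E.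
Proof.
move=> [Q0 _]; rewrite /chi2_summand; case: eqP => _; first by case: eqP.
by rewrite lee_fin divr_ge0 ?sqr_ge0.
Qed.

Lemma chi2_summand_le P Q i : is_distr Q -> (chi2_summand P Q i <= chi2 P Q)%E.
Proof.
move=> hQ; rewrite /chi2 (bigD1 i) //= -/(chi2_summand P Q i) leeDl //.
by apply: sume_ge0 => j _; exact: chi2_summand_ge0.
Qed.

Section SmallChi2.
Variables (P Q : 'rV[R]_n) (beta : R).
Hypotheses (hQ : is_distr Q) (beta_ge0 : 0 <= beta)
  (hchi : (chi2 P Q <= (beta ^+ 2)%:E)%E).

Lemma chi2_le_sqr_support i : Q 0 i = 0 -> P 0 i = 0.
Proof.
move=> Qi; have := le_trans (chi2_summand_le P i hQ) hchi.
by rewrite /chi2_summand Qi eqxx; case: eqP.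
Qed.

Lemma chi2_le_sqr_dist i : `|P 0 i - Q 0 i| <= beta.
Proof.
have [Qi|Qi] := eqVneq (Q 0 i) 0.
  by rewrite (chi2_le_sqr_support Qi) Qi subrr normr0.
have := le_trans (chi2_summand_le P i hQ) hchi.
rewrite /chi2_summand (negbTE Qi) lee_fin.
have Q_gt0 : 0 < Q 0 i by rewrite lt_def Qi hQ.1.
rewrite ler_pdivrMr // => H.
rewrite -ler_sqr ?nnegrE // real_normK ?num_real //.
exact: le_trans H (ler_piMr (sqr_ge0 _) (distr_le1 i hQ)).
Qed.

Variable q : R.
Hypotheses (q_gt0 : 0 < q) (hq : forall i, Q 0 i != 0 -> q <= Q 0 i)
  (beta_le : beta <= q / 2).

Lemma chi2_le_sqr_dist_rel i : `|P 0 i - Q 0 i| <= 2 * beta / q * P 0 i.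
Proof.
have [Qi|Qi] := eqVneq (Q 0 i) 0.
  by rewrite (chi2_le_sqr_support Qi) Qi subrr normr0 mulr0.
have := chi2_le_sqr_dist i; have := hq Qi; rewrite ler_norml => qQ /andP[dN _].
have P_ge : q / 2 <= P 0 i by have := beta_le; lra.
have E : 2 * beta / q * (q / 2) = beta by field; exact: lt0r_neq0.
apply: le_trans (chi2_le_sqr_dist i) _.
by rewrite -{1}E; apply: ler_wpM2l P_ge; rewrite divr_ge0 ?mulr_ge0 ?ler0n ?(ltW q_gt0).
Qed.

Lemma chi2_le_sqr_le3 i : P 0 i <= 3 * Q 0 i.
Proof.
have [Qi|Qi] := eqVneq (Q 0 i) 0.
  by rewrite (chi2_le_sqr_support Qi) Qi mulr0.
have := chi2_le_sqr_dist i; have := hq Qi; rewrite ler_norml => qQ /andP[_ dP].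
have := beta_le; have := q_gt0; lra.
Qed.

End SmallChi2.

End Distributions.

Section Loss.
Context {R : realType} {n : nat} {A : Type} (L : 'I_n -> A -> R).
Implicit Types (P Q X Y : 'rV[R]_n) (a : A).

Lemma expLD P Q a : expL L (P + Q) a = expL L P a + expL L Q a.
Proof. by rewrite /expL -big_split; apply: eq_bigr => i _; rewrite mxE mulrDl. Qed.

Lemma expLB P Q a : expL L (P - Q) a = expL L P a - expL L Q a.
Proof. by rewrite /expL -sumrB; apply: eq_bigr => i _; rewrite !mxE mulrBl. Qed.

Lemma expLZ c P a : expL L (c *: P) a = c * expL L P a.
Proof. by rewrite /expL mulr_sumr; apply: eq_bigr => i _; rewrite mxE mulrA. Qed.

Lemma expL_delta i a : expL L (delta_mx 0 i) a = L i a.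
Proof.
rewrite /expL (bigD1 i) //= big1 ?mxE ?eqxx ?addr0 ?mul1r // => j /negbTE ji.
by rewrite mxE ji andbF mul0r.
Qed.

Lemma HL_bayes P a : bayes_action L P a -> HL L P = expL L P a.
Proof.
move=> ha; apply/le_anti/andP; split.
  by apply: ge_inf; [exists (expL L P a) => _ [b _ <-]; exact: ha | exists a].
by apply: lb_le_inf; [exists (expL L P a); exists a | move=> _ [b _ <-]; exact: ha].
Qed.

Lemma DL_ge0 P aP aQ : bayes_action L P aP -> 0 <= DL L P aP aQ.
Proof. by move=> haP; rewrite subr_ge0. Qed.

Lemma DL_le_cross P Q aP aQ : bayes_action L Q aQ ->
  DL L P aP aQ <= \sum_i (P 0 i - Q 0 i) * (L i aQ - L i aP).
Proof.
move=> haQ; have := haQ aP; rewrite -subr_ge0 => gapQ.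
rewrite -subr_ge0 (_ : _ - _ = expL L Q aP - expL L Q aQ) //.
by rewrite /DL /expL -!sumrB; apply: eq_bigr => i _; ring.
Qed.

Section Attained.
Hypothesis attained : forall P, is_distr P -> exists a, bayes_action L P a.

Lemma HL_le_expL P a : is_distr P -> HL L P <= expL L P a.
Proof.
move=> /attained [b hb]; apply: ge_inf; last by exists a.
by exists (expL L P b) => _ [c _ <-]; exact: hb.
Qed.

Lemma loss_bounded_below : exists m : 'I_n -> R, forall i a, m i <= L i a.
Proof.
have /choice [b hb] i : exists b, bayes_action L (delta_mx 0 i) b.
  exact/attained/is_distr_delta.
by exists (fun i => L i (b i)) => i a; have := hb i a; rewrite !expL_delta.
Qed.

Lemma HL_concave X Y t : is_distr X -> is_distr Y -> 0 <= t <= 1 ->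
  (1 - t) * HL L X + t * HL L Y <= HL L (t *: (Y - X) + X).
Proof.
move=> hX hY /[dup] ht /andP[t0 t1].
have [a ha] := attained (is_distr_lerp hX hY ht).
rewrite (HL_bayes ha) expLD expLZ expLB.
have -> : t * (expL L Y a - expL L X a) + expL L X a =
          (1 - t) * expL L X a + t * expL L Y a by ring.
by rewrite lerD ?ler_wpM2l ?subr_ge0 ?HL_le_expL.
Qed.

Lemma HL_supergradient (h : 'rV[R]_n -> R) X Y :
  (forall P, simplex P -> h P = HL L P) ->
  is_distr X -> is_distr Y -> differentiable h X ->
  HL L Y - HL L X <= 'd h X (Y - X).
Proof.
move=> hh hX hY dX; rewrite -deriveE //.
apply: (cvgr_to_ge (cvg_dnbhs_at_right (@diff_derivable _ _ _ h X (Y - X) dX))).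
near=> t.
have t_gt0 : 0 < t by near: t; exact: nbhs_right_gt.
have t_le1 : t <= 1 by near: t; apply: nbhs_right_le; exact: ltr01.
have ht : 0 <= t <= 1 by rewrite t_le1 ltW.
rewrite /= !hh //; last exact: is_distr_lerp.
rewrite -(ler_pM2l t_gt0) /GRing.scale /= mulrA mulfV ?gt_eqF // mul1r.
have := HL_concave hX hY ht; lra.
Unshelve. all: by end_near.
Qed.

Lemma expL_excess_le (m : 'I_n -> R) P aP a :
  (forall i a, m i <= L i a) -> is_distr P -> bayes_action L P aP ->
  \sum_i P 0 i * (L i aP - m i) <= \sum_i `|L i a - m i|.
Proof.
move=> hm hP haP.
apply: (@le_trans _ _ (\sum_i P 0 i * (L i a - m i))).
  rewrite -subr_ge0 (_ : _ - _ = expL L P a - expL L P aP) ?subr_ge0 //.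
  by rewrite /expL -!sumrB; apply: eq_bigr => i _; ring.
apply: ler_sum => i _; apply: le_trans (ler_wpM2l (hP.1 i) (ler_norm _)) _.
by rewrite ler_piMl ?distr_le1.
Qed.

Lemma DL_le_excess (m : 'I_n -> R) (beta c : R) P Q aP aQ :
  (forall i a, m i <= L i a) -> 0 <= c -> is_distr P ->
  bayes_action L P aP -> bayes_action L Q aQ ->
  (forall i, `|P 0 i - Q 0 i| <= beta) ->
  (forall i, `|P 0 i - Q 0 i| <= c * P 0 i) ->
  DL L P aP aQ <= (beta + c) * \sum_i `|L i aQ - m i|.
Proof.
move=> hm c_ge0 hP haP haQ dist dist_rel; apply: le_trans (DL_le_cross P aP haQ) _.
rewrite (_ : \sum_i _ = \sum_i (P 0 i - Q 0 i) * (L i aQ - m i) +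
                       \sum_i (Q 0 i - P 0 i) * (L i aP - m i)); last first.
  by rewrite -big_split; apply: eq_bigr => i _ /=; ring.
rewrite mulrDl mulr_sumr; apply: lerD.
  apply: ler_sum => i _; apply: le_trans (ler_norm _) _.
  by rewrite normrM ler_wpM2r.
apply: le_trans (ler_wpM2l c_ge0 (expL_excess_le aQ hm hP haP)).
rewrite mulr_sumr; apply: ler_sum => i _.
have e_ge0 : 0 <= L i aP - m i by rewrite subr_ge0.
apply: le_trans (ler_norm _) _; rewrite normrM distrC (ger0_norm e_ge0) mulrA.
exact: ler_wpM2r.
Qed.

Lemma DL_le_diff_gap (h : 'rV[R]_n -> R) P Q aP aQ :
  (forall P, simplex P -> h P = HL L P) ->
  is_distr P -> is_distr Q -> is_distr (Q - 2^-1 *: (P - Q)) ->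
  bayes_action L P aP -> bayes_action L Q aQ ->
  differentiable h P -> differentiable h (Q - 2^-1 *: (P - Q)) ->
  DL L P aP aQ <= 'd h (Q - 2^-1 *: (P - Q)) (P - Q) - 'd h P (P - Q).
Proof.
set v := P - Q; set W := Q - 2^-1 *: v => hh hP hQ hW haP haQ dP dW.
have superP : expL L Q aQ - expL L P aP <= - 'd h P v.
  by rewrite -(HL_bayes haP) -(HL_bayes haQ) -linearN opprB; exact: HL_supergradient.
have superW : expL L v aQ <= 'd h W v.
  rewrite -(ler_pM2l (_ : 0 < 2^-1)) ?invr_gt0 ?ltr0n //.
  rewrite -expLZ -[_ * 'd h W v]linearZ (_ : 2^-1 *: v = Q - W); last first.
    by rewrite opprB addrC subrK.
  apply: le_trans (HL_supergradient hh hW hQ dW).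
  by rewrite expLB (HL_bayes haQ) lerD2l lerN2; exact: HL_le_expL.
have EP : expL L P aQ = expL L v aQ + expL L Q aQ by rewrite -expLD /v subrK.
by rewrite /DL EP -addrA; exact: lerD.
Qed.

Lemma DL_le_sqr (h : 'rV[R]_n -> R) (k beta : R) P Q aP aQ :
  (forall P, simplex P -> h P = HL L P) ->
  is_distr P -> is_distr Q -> is_distr (Q - 2^-1 *: (P - Q)) ->
  bayes_action L P aP -> bayes_action L Q aQ ->
  differentiable h P -> differentiable h (Q - 2^-1 *: (P - Q)) -> 0 <= k ->
  (forall z, `|z - Q| <= beta -> forall v,
     `|'d h z v - 'd h Q v| <= k * (`|z - Q| * `|v|)) ->
  `|P - Q| <= beta -> DL L P aP aQ <= 2 * k * beta ^+ 2.
Proof.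
move=> hh hP hQ hW haP haQ dP dW k_ge0 lip dist.
apply: le_trans (DL_le_diff_gap hh hP hQ hW haP haQ dP dW) _.
set v := P - Q in dist *; set W := Q - 2^-1 *: v.
have dist_W : `|W - Q| <= beta.
  rewrite /W addrC addKr normrN normrZ; apply: le_trans dist.
  by rewrite ler_piMl // ger0_norm; lra.
have lipv z : `|z - Q| <= beta -> `|'d h z v - 'd h Q v| <= k * beta ^+ 2.
  move=> zQ; apply: le_trans (lip z zQ v) _; rewrite expr2.
  by apply: ler_wpM2l => //; exact: ler_pM.
have -> : 'd h W v - 'd h P v = ('d h W v - 'd h Q v) - ('d h P v - 'd h Q v).
  by rewrite opprB addrA subrK.
apply: le_trans (ler_norm _) _; apply: le_trans (ler_normB _ _) _.
have -> : 2 * k * beta ^+ 2 = k * beta ^+ 2 + k * beta ^+ 2 by ring.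
exact: lerD (lipv _ dist_W) (lipv _ dist).
Qed.

End Attained.

End Loss.

Section Lipschitz.
Context {R : realType}.

Lemma differentiable_lipschitz_at (V W : normedModType R) (f : V -> W) x :
  differentiable f x ->
  exists2 k : R, 0 < k & \forall z \near x, `|f z - f x| <= k * `|z - x|.
Proof.
move=> df; have [k k_gt0 hk] := linear_lipschitz (diff_continuous df).
exists (k + 1); first by rewrite addr_gt0.
have /eqaddoP /(_ 1 ltr01) /nbhs_ballP [r r_gt0 hr] := diff_locally df.
apply/nbhs_ballP; exists r => // z; rewrite -ball_normE /= distrC => xz.
have := hr (z - x); rewrite -ball_normE /= sub0r normrN => /(_ xz).
rewrite !fctE subrK mul1r => o_le.
have -> : f z - f x = (f z - (f x + 'd f x (z - x))) + 'd f x (z - x).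
  by rewrite opprD addrA subrK.
rewrite mulrDl mul1r addrC; apply: le_trans (ler_normD _ _) _.
by apply: lerD => //; exact: hk.
Qed.

Lemma linear_rV_dist_le {n : nat} (f g : {linear 'rV[R]_n -> R}) v :
  `|f v - g v| <= (\sum_j `|f 'e_j - g 'e_j|) * `|v|.
Proof.
rewrite {1 2}(row_sum_delta v) (linear_sum f) (linear_sum g) -sumrB mulr_suml.
apply: le_trans (ler_norm_sum _ _ _) _; apply: ler_sum => j _.
rewrite (linearZZ f) (linearZZ g) -scalerBr normrZ mulrC.
by apply: ler_wpM2l => //; exact: entry_le_mx_norm.
Qed.

Lemma diff_lipschitz_at {n : nat} (h : 'rV[R]_n -> R) x :
  (forall v, differentiable (fun z => 'd h z v) x) ->
  exists2 k : R, 0 <= k & \forall z \near x, forall v,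
    `|'d h z v - 'd h x v| <= k * (`|z - x| * `|v|).
Proof.
move=> d2.
have /choice [k hk] j : exists k : R, 0 < k /\
    \forall z \near x, `|'d h z 'e_j - 'd h x 'e_j| <= k * `|z - x|.
  by have [k ? ?] := differentiable_lipschitz_at (d2 'e_j); exists k.
exists (\sum_j k j); first by apply: sumr_ge0 => j _; exact/ltW/(hk j).1.
near=> z => v.
have hz : forall j, `|'d h z 'e_j - 'd h x 'e_j| <= k j * `|z - x|.
  by near: z; exact: filter_forall _ (fun j => (hk j).2).
apply: le_trans (linear_rV_dist_le _ _ v) _.
rewrite mulrA [_ * `|z - x|]mulr_suml; apply: ler_wpM2r => //; exact: ler_sum.
Unshelve. all: by end_near.
Qed.

End Lipschitz.

Theorem lemma8p2 (R : realType) (n : nat) (A : Type) (L : 'I_n -> A -> R)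
  (attained : forall P : 'rV[R]_n, is_distr P -> exists a, bayes_action L P a)
  (Q : 'rV[R]_n) (hQ : is_distr Q) (aQ : A) (haQ : bayes_action L Q aQ) :
  (exists C beta0 : R, 0 < beta0 /\
     forall (beta : R) (P : 'rV[R]_n) (aP : A),
       0 < beta < beta0 -> is_distr P -> bayes_action L P aP ->
       (chi2 P Q <= (beta ^+ 2)%:E)%E ->
       `| DL L P aP aQ | <= C * beta)
  /\
  ((exists (U : set 'rV[R]_n) (h : 'rV[R]_n -> R),
      open U /\ simplex `<=` U /\ (forall P, simplex P -> h P = HL L P) /\
      twice_differentiable_on U h) ->
   exists C beta0 : R, 0 < beta0 /\
     forall (beta : R) (P : 'rV[R]_n) (aP : A),
       0 < beta < beta0 -> is_distr P -> bayes_action L P aP ->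
       (chi2 P Q <= (beta ^+ 2)%:E)%E ->
       `| DL L P aP aQ | <= C * beta ^+ 2).
Proof.
have [q q_gt0 hq] := support_min_gt0 hQ.
split.
  have [m hm] := loss_bounded_below attained.
  pose K := \sum_i `|L i aQ - m i|.
  exists ((1 + 2 / q) * K), (q / 2); split; first by rewrite divr_gt0.
  move=> beta P aP /andP[b_gt0 b_lt] hP haP hchi; have b_ge0 := ltW b_gt0.
  have c_ge0 : 0 <= 2 * beta / q by rewrite divr_ge0 ?mulr_ge0 ?ltW.
  rewrite ger0_norm ?DL_ge0 //.
  apply: le_trans (DL_le_excess hm c_ge0 hP haP haQ (chi2_le_sqr_dist hQ b_ge0 hchi)
    (chi2_le_sqr_dist_rel hQ b_ge0 hchi q_gt0 hq (ltW b_lt))) _.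
  by rewrite (_ : _ * K * beta = (beta + 2 * beta / q) * K) //; ring.
move=> [U [h [_ [sU [hh [d1 d2]]]]]].
have [k k_ge0 /nbhs_ballP [r r_gt0 lip]] := diff_lipschitz_at (fun v => d2 v Q (sU Q hQ)).
exists (2 * k), (Order.min (q / 2) r); split; first by rewrite lt_min r_gt0 divr_gt0.
move=> beta P aP /andP[b_gt0]; rewrite lt_min => /andP[b_lt b_r] hP haP hchi.
have b_ge0 := ltW b_gt0.
have hW := is_distr_reflect hP hQ (chi2_le_sqr_le3 hQ b_ge0 hchi q_gt0 hq (ltW b_lt)).
rewrite ger0_norm ?DL_ge0 //.
apply: (DL_le_sqr attained hh hP hQ hW haP haQ (d1 _ (sU _ hP)) (d1 _ (sU _ hW)) k_ge0).
  move=> z zQ v; apply: lip; rewrite -ball_normE /= distrC.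
  exact: le_lt_trans zQ b_r.
apply: (mx_norm_le b_ge0) => i j; rewrite (ord1 i) !mxE.
exact: chi2_le_sqr_dist hQ b_ge0 hchi j.
Qed.
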